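(* Let ${\mathbf{x}}_1,\dots,{\mathbf{x}}_T\in\mathbb{R}^N$ with ${\mathbf{C}}_{xx}:=\frac1T\sum_{t=1}^T{\mathbf{x}}_t{\mathbf{x}}_t^\top$ positive definite, and let ${\mathbf{W}}=[{\mathbf{w}}_1,\dots,{\mathbf{w}}_K]\in\mathbb{R}^{N\times K}$ have unit-norm columns with $\operatorname{span}\{{\mathbf{w}}_1{\mathbf{w}}_1^\top,\dots,{\mathbf{w}}_K{\mathbf{w}}_K^\top\}={\mathbb{S}}^N$. For ${\mathbf{y}}_1,\dots,{\mathbf{y}}_T\in\mathbb{R}^N$ and ${\mathbf{g}}\in\mathbb{R}^K$ define $$L({\mathbf{y}}_1,\dots,{\mathbf{y}}_T,{\mathbf{g}}):=\frac1T\sum_{t=1}^T\Big(\|{\mathbf{x}}_t-{\mathbf{y}}_t\|_2^2+\sum_{i=1}^K g_i\big\{({\mathbf{w}}_i^\top{\mathbf{y}}_t)^2-1\big\}\Big).$$ Let ${\mathbf{y}}_t^\ast:={\mathbf{C}}_{xx}^{-1/2}{\mathbf{x}}_t$ and let ${\mathbf{g}}^\ast\in\mathbb{R}^K$ be any vector with ${\mathbf{I}}_N+{\mathbf{W}}\operatorname{diag}({\mathbf{g}}^\ast){\mathbf{W}}^\top={\mathbf{C}}_{xx}^{1/2}$ (such a vector exists). Then $({\mathbf{y}}_1^\ast,\dots,{\mathbf{y}}_T^\ast,{\mathbf{g}}^\ast)$ is a saddle point of $L$: $$L({\mathbf{y}}^\ast_{1:T},{\mathbf{g}})\le L({\mathbf{y}}^\ast_{1:T},{\mathbf{g}}^\ast)\le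 L({\mathbf{y}}_{1:T},{\mathbf{g}}^\ast)\quad\text{for all }{\mathbf{y}}_1,\dots,{\mathbf{y}}_T\in\mathbb{R}^N,\ {\mathbf{g}}\in\mathbb{R}^K,$$ and consequently $$\min_{{\mathbf{y}}_1,\dots,{\mathbf{y}}_T}\max_{{\mathbf{g}}}L=\max_{{\mathbf{g}}}\min_{{\mathbf{y}}_1,\dots,{\mathbf{y}}_T}L=L({\mathbf{y}}^\ast_{1:T},{\mathbf{g}}^\ast).$$ Moreover, ${\mathbf{y}}_{1:T}\mapsto L({\mathbf{y}}_{1:T},{\mathbf{g}}^\ast)$ is strictly convex with unique minimizer ${\mathbf{y}}^\ast_{1:T}$.
   Context: ${\mathbb{S}}^N$ is the space of $N\times N$ real symmetric matrices; $\operatorname{diag}({\mathbf{g}})$ is the diagonal matrix with diagonal ${\mathbf{g}}$; ${\mathbf{C}}_{xx}^{1/2}$ is the symmetric positive definite square root and ${\mathbf{C}}_{xx}^{-1/2}$ its inverse. *)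

From HB Require Import structures.
From mathcomp Require Import all_boot all_order all_algebra.
From mathcomp Require Import all_classical all_reals.
From mathcomp Require Import ereal.
Set Implicit Arguments. Unset Strict Implicit. Unset Printing Implicit Defensive.
Import Order.TTheory GRing.Theory Num.Theory.
Local Open Scope ring_scope.

Section Defs.
Variable R : realType.

Definition sqnorm (N : nat) (v : 'cV[R]_N) : R := \sum_(n < N) v n 0 ^+ 2.

Definition posdef (N : nat) (A : 'M[R]_N) : Prop :=
  A^T = A /\ forall v : 'cV[R]_N, v != 0 -> 0 < (v^T *m A *m v) 0 0.

Definition Cxx (N T : nat) (x : 'I_T -> 'cV[R]_N) : 'M[R]_N :=
  (T%:R)^-1 *: \sum_(t < T) (x t *m (x t)^T).

Definition is_psd_sqrt (N : nat) (A S : 'M[R]_N) : Prop :=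
  posdef S /\ S *m S = A.

(* the objective L(y_1..y_T, g); w_i = col i W, g_i = g 0 i *)
Definition Lobj (N T K : nat) (x : 'I_T -> 'cV[R]_N) (W : 'M[R]_(N, K))
  (y : 'I_T -> 'cV[R]_N) (g : 'rV[R]_K) : R :=
  (T%:R)^-1 * \sum_(t < T)
     (sqnorm (x t - y t)
      + \sum_(i < K) g 0 i * ((((col i W)^T *m y t) 0 0) ^+ 2 - 1)).

Definition maxg_L (N T K : nat) (x : 'I_T -> 'cV[R]_N) (W : 'M[R]_(N, K))
  (y : 'I_T -> 'cV[R]_N) : \bar R :=
  ereal_sup [set (Lobj x W y g)%:E | g in [set: 'rV[R]_K]].

Definition miny_L (N T K : nat) (x : 'I_T -> 'cV[R]_N) (W : 'M[R]_(N, K))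
  (g : 'rV[R]_K) : \bar R :=
  ereal_inf [set (Lobj x W y g)%:E | y in [set: 'I_T -> 'cV[R]_N]].

End Defs.

From HB Require Import structures.
From mathcomp Require Import all_boot all_order all_algebra.
From mathcomp Require Import all_classical all_reals.
From mathcomp Require Import ereal.
From mathcomp Require Import ring lra.
Set Implicit Arguments. Unset Strict Implicit. Unset Printing Implicit Defensive.
Import Order.TTheory GRing.Theory Num.Theory.
Local Open Scope ring_scope.

(* Write S = C_xx^{1/2} and ys_t = S^{-1} x_t.
   - Since the rank-one matrices w_i w_i^T span the symmetric matrices, the
     symmetric matrix S - I equals W diag(gs) W^T for some multiplier gs.
   - The constraint term sum_i g_i ((w_i^T y)^2 - 1) is the quadratic form
     y^T (W diag(g) W^T) y minus sum_i g_i; for g = gs it is y^T (S - I) y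
     minus a constant.  Completing the square with S ys_t = x_t gives
       L(y, gs) = L(ys, gs) + (1/T) sum_t (y_t - ys_t)^T S (y_t - ys_t).
   - Whitening: (1/T) sum_t (w^T ys_t)^2 = w^T w, so every constraint holds on
     average at ys, and L(ys, g) does not depend on g.
   These two facts make (ys, gs) a saddle point; a general lemma turns any
   saddle point into the minimax/maximin equalities, and the excess term being
   a positive definite averaged quadratic form gives strict convexity and
   uniqueness of the minimiser. *)

Definition dotp (R : realType) (N : nat) (u v : 'cV[R]_N) : R := (u^T *m v) 0 0.

Section InnerProduct.
Variables (R : realType) (N : nat).
Implicit Types (u v w : 'cV[R]_N) (a : R).

Lemma dotpE u v : dotp u v = \sum_(n < N) u n 0 * v n 0.
Proof. by rewrite /dotp mxE; apply: eq_bigr => n _; rewrite mxE. Qed.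

Lemma dotpC u v : dotp u v = dotp v u.
Proof. by rewrite !dotpE; apply: eq_bigr => n _; rewrite mulrC. Qed.

Lemma dotpDl u v w : dotp (u + v) w = dotp u w + dotp v w.
Proof. by rewrite !dotpE -big_split; apply: eq_bigr => n _; rewrite !mxE mulrDl. Qed.

Lemma dotpNl u w : dotp (- u) w = - dotp u w.
Proof. by rewrite !dotpE -sumrN; apply: eq_bigr => n _; rewrite !mxE mulNr. Qed.

Lemma dotpBl u v w : dotp (u - v) w = dotp u w - dotp v w.
Proof. by rewrite dotpDl dotpNl. Qed.

Lemma dotpZl a u w : dotp (a *: u) w = a * dotp u w.
Proof. by rewrite !dotpE mulr_sumr; apply: eq_bigr => n _; rewrite !mxE mulrA. Qed.

Lemma dotpDr u v w : dotp w (u + v) = dotp w u + dotp w v.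
Proof. by rewrite !(dotpC w) dotpDl. Qed.

Lemma dotpNr u w : dotp w (- u) = - dotp w u.
Proof. by rewrite !(dotpC w) dotpNl. Qed.

Lemma dotpBr u v w : dotp w (u - v) = dotp w u - dotp w v.
Proof. by rewrite !(dotpC w) dotpBl. Qed.

Lemma dotpZr a u w : dotp w (a *: u) = a * dotp w u.
Proof. by rewrite !(dotpC w) dotpZl. Qed.

Lemma sqnormE v : sqnorm v = dotp v v.
Proof. by rewrite dotpE; apply: eq_bigr => n _; rewrite expr2. Qed.

Lemma dotp_sym_mulmx (S : 'M[R]_N) u v :
  S^T = S -> dotp u (S *m v) = dotp (S *m u) v.
Proof. by move=> hS; rewrite /dotp trmx_mul hS mulmxA. Qed.

End InnerProduct.

Section PositiveDefinite.
Variables (R : realType) (N : nat) (S : 'M[R]_N).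
Hypothesis S_posdef : posdef S.

Lemma qform_gt0 (v : 'cV[R]_N) : v != 0 -> 0 < dotp v (S *m v).
Proof. by move=> nz; rewrite /dotp mulmxA; apply: S_posdef.2. Qed.

Lemma qform_ge0 (v : 'cV[R]_N) : 0 <= dotp v (S *m v).
Proof.
have [->|nz] := eqVneq v 0; first by rewrite /dotp !mulmx0 mxE.
exact/ltW/qform_gt0.
Qed.

(* A positive definite matrix has trivial kernel, hence is invertible. *)
Lemma posdef_unitmx : S \in unitmx.
Proof.
rewrite -row_free_unit -kermx_eq0; apply/negPn/negP => kerS_neq0.
have [i nz_row] : exists i, row i (kermx S) != 0.
  apply/existsP; apply: contraR kerS_neq0 => /existsPn zero_rows.
  by apply/eqP/row_matrixP => i; rewrite row0; apply/eqP/negPn/zero_rows.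
have kerS : kermx S *m S = 0 by apply/sub_kermxP.
have nz_v : (row i (kermx S))^T != 0 by rewrite -trmx0 (inj_eq trmx_inj).
have Sv0 : S *m (row i (kermx S))^T = 0.
  by rewrite -{1}S_posdef.1 -trmx_mul -row_mul kerS row0 trmx0.
by have := qform_gt0 nz_v; rewrite Sv0 /dotp mulmx0 mxE ltxx.
Qed.

End PositiveDefinite.

Lemma qform_convex_comb (R : realType) (N : nat) (S : 'M[R]_N) (u v : 'cV[R]_N) (a : R) :
  S^T = S ->
  dotp (a *: u + (1 - a) *: v) (S *m (a *: u + (1 - a) *: v))
  = a * dotp u (S *m u) + (1 - a) * dotp v (S *m v)
    - a * (1 - a) * dotp (u - v) (S *m (u - v)).
Proof.
move=> hS; rewrite !(mulmxDr, mulmxBr, mulmxN) -!scalemxAr.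
rewrite !(dotpDl, dotpDr, dotpBl, dotpBr, dotpZl, dotpZr, dotpNl, dotpNr).
by rewrite (dotp_sym_mulmx v u hS) (dotpC (S *m v)); ring.
Qed.

(* The averaged quadratic form (1/T) sum_t z_t^T S z_t of a T-tuple of vectors:
   the excess of L(., gs) over its minimum. *)
Definition meanq (R : realType) (N T : nat) (S : 'M[R]_N) (z : 'I_T -> 'cV[R]_N) : R :=
  T%:R^-1 * \sum_(t < T) dotp (z t) (S *m z t).

Section AveragedQuadraticForm.
Variables (R : realType) (N T : nat) (S : 'M[R]_N).
Hypothesis S_posdef : posdef S.
Implicit Types (y z : 'I_T -> 'cV[R]_N).

Lemma meanq_ge0 z : 0 <= meanq S z.
Proof.
apply: mulr_ge0; first by rewrite invr_ge0 ler0n.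
by apply: sumr_ge0 => t _; apply: qform_ge0.
Qed.

Lemma meanq_gt0 z : (exists t, z t != 0) -> 0 < meanq S z.
Proof.
move=> [t nz]; apply: mulr_gt0.
  by rewrite invr_gt0 ltr0n; apply: leq_ltn_trans (ltn_ord t).
rewrite (bigD1 t) //=; apply: (@lt_le_trans _ _ (dotp (z t) (S *m z t))).
  exact: qform_gt0.
by rewrite lerDl; apply: sumr_ge0 => i _; apply: qform_ge0.
Qed.

Lemma tuple_neq_sub y y' : y <> y' -> exists t, y t - y' t != 0.
Proof.
move=> neq; case: (pselect (exists t, y t - y' t != 0)) => // all_eq.
exfalso; apply: neq; apply: funext => t; apply/eqP; rewrite -subr_eq0.
by apply/negPn/negP => nz; apply: all_eq; exists t.
Qed.

Variables (F : ('I_T -> 'cV[R]_N) -> R) (c : R) (ys : 'I_T -> 'cV[R]_N).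
Hypothesis F_excess : forall y, F y = c + meanq S (fun t => y t - ys t).

Lemma excess_strictly_convex y y' (a : R) : y <> y' -> 0 < a < 1 ->
  F (fun t => a *: y t + (1 - a) *: y' t) < a * F y + (1 - a) * F y'.
Proof.
move=> neq /andP[a_gt0 a_lt1].
have comb t : a *: y t + (1 - a) *: y' t - ys t
    = a *: (y t - ys t) + (1 - a) *: (y' t - ys t).
  by rewrite !scalerBr addrACA -opprD -scalerDl (addrC a) subrK scale1r.
have pointwise t :
    dotp (a *: y t + (1 - a) *: y' t - ys t) (S *m (a *: y t + (1 - a) *: y' t - ys t))
    = a * dotp (y t - ys t) (S *m (y t - ys t))
      + (1 - a) * dotp (y' t - ys t) (S *m (y' t - ys t))
      - a * (1 - a) * dotp (y t - y' t) (S *m (y t - y' t)).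
  have diff : y t - ys t - (y' t - ys t) = y t - y' t by rewrite opprB addrA subrK.
  by rewrite comb qform_convex_comb ?S_posdef.1 // diff.
have split_mean : meanq S (fun t => a *: y t + (1 - a) *: y' t - ys t)
    = a * meanq S (fun t => y t - ys t) + (1 - a) * meanq S (fun t => y' t - ys t)
      - a * (1 - a) * meanq S (fun t => y t - y' t).
  by rewrite /meanq (eq_bigr _ (fun t _ => pointwise t)) sumrB big_split /= -!mulr_sumr; ring.
have gap_pos : 0 < a * (1 - a) * meanq S (fun t => y t - y' t).
  apply: mulr_gt0; last exact: meanq_gt0 (tuple_neq_sub neq).
  by apply: mulr_gt0; rewrite ?subr_gt0.
rewrite !F_excess split_mean; nra.
Qed.

Lemma excess_unique_minimizer y : (forall y', F y <= F y') -> y = ys.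
Proof.
move=> y_min; case: (pselect (y = ys)) => // neq; exfalso.
have no_excess : meanq S (fun t => ys t - ys t) = 0.
  by rewrite /meanq big1 ?mulr0 // => t _; rewrite subrr mulmx0 /dotp mulmx0 mxE.
have := y_min ys; rewrite !F_excess no_excess.
have := meanq_gt0 (tuple_neq_sub neq); lra.
Qed.

End AveragedQuadraticForm.

Lemma saddle_point_minimax (R : realType) (A B : Type) (f : A -> B -> R) (a0 : A) (b0 : B) :
  (forall b, f a0 b <= f a0 b0) -> (forall a, f a0 b0 <= f a b0) ->
  ereal_inf [set ereal_sup [set (f a b)%:E | b in [set: B]] | a in [set: A]]
    = (f a0 b0)%:E /\
  ereal_sup [set ereal_inf [set (f a b)%:E | a in [set: A]] | b in [set: B]]
    = (f a0 b0)%:E.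
Proof.
move=> max_b min_a; split; apply/le_anti/andP; split.
- apply: le_trans (_ : ereal_sup [set (f a0 b)%:E | b in [set: B]] <= _)%E.
    by apply: ereal_inf_lbound; exists a0.
  by apply: ge_ereal_sup => _ [b _ <-]; rewrite lee_fin.
- apply: le_ereal_inf_tmp => _ [a _ <-].
  apply: le_trans (_ : (f a b0)%:E <= _)%E; first by rewrite lee_fin.
  by apply: ereal_sup_ubound; exists b0.
- apply: ge_ereal_sup => _ [b _ <-].
  apply: le_trans (_ : (f a0 b)%:E <= _)%E; last by rewrite lee_fin.
  by apply: ereal_inf_lbound; exists a0.
- apply: le_trans (_ : ereal_inf [set (f a b0)%:E | a in [set: A]] <= _)%E.
    by apply: le_ereal_inf_tmp => _ [a _ <-]; rewrite lee_fin.
  by apply: ereal_sup_ubound; exists b0.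
Qed.

Lemma sum_outer_Cxx (R : realType) (N T : nat) (x : 'I_T -> 'cV[R]_N) :
  \sum_(t < T) x t *m (x t)^T = T%:R *: Cxx x.
Proof.
case: T x => [|n] x; first by rewrite big_ord0 scale0r.
by rewrite /Cxx scalerA mulfV ?scale1r // pnatr_eq0.
Qed.

Section Objective.
Variables (R : realType) (N K : nat) (W : 'M[R]_(N, K)).

Lemma diag_frame_sum (c : 'rV[R]_K) :
  W *m diag_mx c *m W^T = \sum_(i < K) c 0 i *: (col i W *m (col i W)^T).
Proof.
apply/matrixP => k j; rewrite mul_mx_diag !mxE summxE; apply: eq_bigr => i _.
by rewrite !mxE big_ord1 !mxE mulrA (mulrC (W k i)).
Qed.

Lemma constraint_qform (g : 'rV[R]_K) (y : 'cV[R]_N) :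
  \sum_(i < K) g 0 i * ((((col i W)^T *m y) 0 0) ^+ 2 - 1)
  = dotp y ((W *m diag_mx g *m W^T) *m y) - \sum_(i < K) g 0 i.
Proof.
have -> : dotp y ((W *m diag_mx g *m W^T) *m y)
    = ((W^T *m y)^T *m diag_mx g *m (W^T *m y)) 0 0.
  by rewrite /dotp trmx_mul trmxK !mulmxA.
rewrite mul_mx_diag mxE -sumrB; apply: eq_bigr => i _.
by rewrite tr_col -row_mul !mxE; ring.
Qed.

Variables (T : nat) (x : 'I_T -> 'cV[R]_N) (S : 'M[R]_N).
Hypothesis S_sym : S^T = S.

Lemma complete_square (xt y ys : 'cV[R]_N) : S *m ys = xt ->
  sqnorm (xt - y) + dotp y ((S - 1%:M) *m y)
  = sqnorm (xt - ys) + dotp ys ((S - 1%:M) *m ys) + dotp (y - ys) (S *m (y - ys)).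
Proof.
move=> Sys; rewrite !sqnormE !mulmxBl !mul1mx mulmxBr.
rewrite !(dotpBl, dotpBr) (dotp_sym_mulmx ys y S_sym) Sys (dotpC xt ys) (dotpC y xt).
ring.
Qed.

Lemma Lobj_excess (gs : 'rV[R]_K) (ys : 'I_T -> 'cV[R]_N) :
  (forall t, S *m ys t = x t) -> 1%:M + W *m diag_mx gs *m W^T = S ->
  forall y, Lobj x W y gs = Lobj x W ys gs + meanq S (fun t => y t - ys t).
Proof.
move=> Sys gsS y; rewrite /Lobj /meanq -mulrDr -big_split /=; congr (_ * _).
apply: eq_bigr => t _; rewrite !constraint_qform.
have -> : W *m diag_mx gs *m W^T = S - 1%:M by rewrite -gsS addrAC subrr add0r.
have := complete_square (y t) (Sys t); lra.
Qed.

Hypotheses (S_unit : S \in unitmx) (S_sqrt : S *m S = Cxx x).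

Lemma whitened_second_moment (w : 'cV[R]_N) :
  \sum_(t < T) ((w^T *m (invmx S *m x t)) 0 0) ^+ 2 = T%:R * dotp w w.
Proof.
have sq_outer (v : 'cV[R]_N) : ((w^T *m v) 0 0) ^+ 2 = (w^T *m (v *m v^T) *m w) 0 0.
  rewrite [in RHS]mulmxA -[in RHS](mulmxA (w^T *m v)) [in RHS]mxE big_ord1 expr2.
  by rewrite -[v^T *m w]trmxK trmx_mul trmxK [(_^T) 0 0]mxE.
under eq_bigr do rewrite sq_outer.
rewrite -summxE -mulmx_suml -mulmx_sumr.
have -> : \sum_(t < T) (invmx S *m x t) *m (invmx S *m x t)^T
    = invmx S *m (\sum_(t < T) x t *m (x t)^T) *m invmx S.
  rewrite mulmx_sumr mulmx_suml; apply: eq_bigr => t _.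
  by rewrite trmx_mul trmx_inv S_sym !mulmxA.
rewrite sum_outer_Cxx -S_sqrt -scalemxAr -scalemxAl mulmxA mulVmx // mul1mx mulmxV //.
by rewrite -scalemxAr -scalemxAl mulmx1 mxE.
Qed.

(* At ys = S^{-1} x with unit-norm frame vectors the constraints hold on
   average, so L(ys, g) is independent of the multipliers g. *)
Lemma Lobj_whitened_const (g g' : 'rV[R]_K) :
  (forall i, sqnorm (col i W) = 1) ->
  Lobj x W (fun t => invmx S *m x t) g = Lobj x W (fun t => invmx S *m x t) g'.
Proof.
move=> unit_cols.
suff no_constraint (h : 'rV[R]_K) : Lobj x W (fun t => invmx S *m x t) h
    = T%:R^-1 * \sum_(t < T) sqnorm (x t - invmx S *m x t).
  by rewrite !no_constraint.
rewrite /Lobj big_split /= [X in _ + X]exchange_big /=.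
rewrite [X in _ + X]big1 ?addr0 // => i _.
by rewrite -mulr_sumr sumrB whitened_second_moment -sqnormE unit_cols mulr1
           sumr_const card_ord subrr mulr0.
Qed.

End Objective.

Theorem mainTheorem4 (R : realType) (N T K : nat)
  (x : 'I_T -> 'cV[R]_N) (W : 'M[R]_(N, K)) (S : 'M[R]_N) :
  posdef (Cxx x) ->
  (forall i : 'I_K, sqnorm (col i W) = 1) ->
  (forall A : 'M[R]_N, A^T = A ->
     exists c : 'rV[R]_K, A = \sum_(i < K) c 0 i *: (col i W *m (col i W)^T)) ->
  is_psd_sqrt (Cxx x) S ->
  let ystar := fun t : 'I_T => invmx S *m x t in
  (exists g : 'rV[R]_K, 1%:M + W *m diag_mx g *m W^T = S) /\
  forall gstar : 'rV[R]_K, 1%:M + W *m diag_mx gstar *m W^T = S ->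
    [/\ (forall (y : 'I_T -> 'cV[R]_N) (g : 'rV[R]_K),
           Lobj x W ystar g <= Lobj x W ystar gstar /\
           Lobj x W ystar gstar <= Lobj x W y gstar),
        ereal_inf [set maxg_L x W y | y in [set: 'I_T -> 'cV[R]_N]]
          = (Lobj x W ystar gstar)%:E,
        ereal_sup [set miny_L x W g | g in [set: 'rV[R]_K]]
          = (Lobj x W ystar gstar)%:E,
        (forall (y y' : 'I_T -> 'cV[R]_N) (a : R), y <> y' -> 0 < a < 1 ->
           Lobj x W (fun t => a *: y t + (1 - a) *: y' t) gstar
             < a * Lobj x W y gstar + (1 - a) * Lobj x W y' gstar) &
        (forall y : 'I_T -> 'cV[R]_N,
           (forall y' : 'I_T -> 'cV[R]_N, Lobj x W y gstar <= Lobj x W y' gstar) ->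
           y = ystar)].
Proof.
move=> _ unit_cols frame_spans [S_pd S_sqrt] ystar.
have S_sym : S^T = S := S_pd.1.
have S_unit := posdef_unitmx S_pd.
split.
  have sym : (S - 1%:M)^T = S - 1%:M by rewrite linearB /= S_sym trmx1.
  have [c S_sub1] := frame_spans (S - 1%:M) sym.
  by exists c; rewrite diag_frame_sum -S_sub1 addrC subrK.
move=> gs gsS.
have Systar t : S *m ystar t = x t by rewrite mulmxA mulmxV // mul1mx.
have excess := Lobj_excess S_sym Systar gsS.
have indep g : Lobj x W ystar g = Lobj x W ystar gs.
  exact: Lobj_whitened_const S_sym S_unit S_sqrt g gs unit_cols.
have min_y y : Lobj x W ystar gs <= Lobj x W y gs.
  by rewrite (excess y) lerDl meanq_ge0.
have max_g g : Lobj x W ystar g <= Lobj x W ystar gs by rewrite indep.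
have [minimax maximin] := saddle_point_minimax max_g min_y.
split.
- by move=> y g; split; [exact: max_g | exact: min_y].
- exact: minimax.
- exact: maximin.
- exact: @excess_strictly_convex _ _ _ _ S_pd (fun y => Lobj x W y gs) (Lobj x W ystar gs) ystar excess.
- exact: @excess_unique_minimizer _ _ _ _ S_pd (fun y => Lobj x W y gs) (Lobj x W ystar gs) ystar excess.
Qed.
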